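(* Let $k\geq 2$ be an integer and let $G$ be a graph on $n$ vertices with minimum degree $\delta(G)=\delta>\frac{(k-1)n}{k}$ and more than one $K_{k+1}$-component. Then (i) $|\mathrm{int}_k(G)|\geq 2\delta-n+2>0$, and (ii) every $K_{k+1}$-component $C$ of $G$ satisfies $|\mathrm{ext}(C)|\leq n-\delta-1$.
   Context: A $K_{k+1}$-walk in $G$ is a sequence of copies of $K_k$ in which consecutive copies lie in a common copy of $K_{k+1}$; its endpoints are then $K_{k+1}$-connected; the equivalence classes of copies of $K_k$ are the $K_{k+1}$-components. The vertices of a component $C$ are the vertices of the copies of $K_k$ in $C$. $\mathrm{int}_k(G)$ is the set of vertices of $G$ that are vertices of more than one $K_{k+1}$-component; $\mathrm{ext}(C)$ is the set of vertices of $C$ that are vertices of no other $K_{k+1}$-component. *)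

(* A simple graph on a finite vertex type T is a symmetric,
   irreflexive boolean relation e : rel T. *)
From mathcomp Require Import all_boot.
Set Implicit Arguments. Unset Strict Implicit. Unset Printing Implicit Defensive.

Section KComponents.
Variables (T : finType) (e : rel T).

Definition deg (v : T) : nat := #|[set w | e v w]|.

Definition is_clique (A : {set T}) : bool :=
  [forall x in A, forall y in A, (x != y) ==> e x y].

Definition Kcopy (k : nat) (A : {set T}) : bool := is_clique A && (#|A| == k).

Definition Kstep (k : nat) : rel {set T} := fun A B =>
  [&& Kcopy k A, Kcopy k B &
      [exists C : {set T}, [&& Kcopy k.+1 C, A \subset C & B \subset C]]].

Definition Kconn (k : nat) (A B : {set T}) : bool := connect (Kstep k) A B.

(* vertices of the K_{k+1}-component containing the copy A of K_k *)
Definition comp_vertices (k : nat) (A : {set T}) : {set T} :=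
  [set x | [exists B : {set T}, [&& Kcopy k B, Kconn k A B & x \in B]]].

Definition int_k (k : nat) : {set T} :=
  [set x | [exists A : {set T}, exists B : {set T},
     [&& Kcopy k A, Kcopy k B, ~~ Kconn k A B, x \in A & x \in B]]].

Definition ext (k : nat) (A : {set T}) : {set T} :=
  [set x in comp_vertices k A |
     [forall D : {set T}, (Kcopy k D && (x \in D)) ==> Kconn k A D]].

Definition many_components (k : nat) : Prop :=
  exists A B : {set T}, [/\ Kcopy k A, Kcopy k B & ~~ Kconn k A B].

End KComponents.

From mathcomp Require Import all_boot zify.
Set Implicit Arguments. Unset Strict Implicit. Unset Printing Implicit Defensive.

(* Let c = n - delta, so that k c < n and every vertex has at most c
   non-neighbours.  Counting non-adjacent pairs shows that any k vertices have
   a common neighbour, so cliques extend up to size k + 1.  Given a copy B of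
   K_k, take a maximal clique K containing B, of size s > k.  Every vertex has a
   non-neighbour in K, and a vertex with k neighbours in K is a vertex of the
   component of B; so if u vertices lie outside that component, counting
   non-adjacent pairs between K and V gives n + u (s - k) <= s c < n + (s - k) c,
   whence u < c.  This gives (ii), since ext(A) avoids the component of any copy
   not connected to A.  For (i), fix x1 outside int_k: every vertex outside int_k
   adjacent to x1 lies in ext of the component of x1, and x1 itself is in ext
   and is its own non-neighbour, so at most (c - 1) + c - 1 vertices lie outside
   int_k. *)

Lemma exists_subset_card (T : finType) (S : {set T}) m :
  m <= #|S| -> exists2 A : {set T}, A \subset S & #|A| = m.
Proof.
case/card_geqP => s [us ss sS]; exists [set x in s]; last first.
  by rewrite cardsE (card_uniqP us).
by apply/subsetP => x; rewrite inE; apply: sS.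
Qed.

Lemma cards_swap (T : finType) (A : {set T}) a b :
  a \in A -> b \notin A -> #|b |: (A :\ a)| = #|A|.
Proof.
by move=> aA bA; rewrite cardsU1 !inE negb_and bA orbT (cardsD1 a A) aA add1n.
Qed.

Section Cliques.
Variables (T : finType) (e : rel T).

Lemma is_cliqueP (A : {set T}) :
  reflect {in A &, forall x y, x != y -> e x y} (is_clique e A).
Proof.
apply: (iffP forallP) => [cA x y xA yA xy | cA x].
  by move: (cA x); rewrite xA => /forallP/(_ y); rewrite yA xy.
by apply/implyP => xA; apply/forall_inP => y yA; apply/implyP; apply: cA.
Qed.

Lemma subset_clique (A B : {set T}) :
  B \subset A -> is_clique e A -> is_clique e B.
Proof.
move=> /subsetP sBA /is_cliqueP cA; apply/is_cliqueP => x y xB yB.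
exact: cA (sBA x xB) (sBA y yB).
Qed.

Lemma clique_set1 x : is_clique e [set x].
Proof. by apply/is_cliqueP => y z /set1P-> /set1P->; rewrite eqxx. Qed.

Lemma clique_setU1 (A : {set T}) v :
  symmetric e -> is_clique e A -> {in A, forall a, e a v} -> is_clique e (v |: A).
Proof.
move=> esym /is_cliqueP cA Av; apply/is_cliqueP => x y.
case/setU1P => [->|xA]; case/setU1P => [->|yA]; rewrite ?eqxx //.
- by rewrite esym Av.
- by rewrite Av.
- exact: cA.
Qed.

Lemma Kstep_sym k : symmetric (Kstep e k).
Proof.
move=> A B; rewrite /Kstep andbCA; congr [&& _, _ & _].
by apply/existsP/existsP => -[C /and3P[hC sA sB]]; exists C; rewrite hC sA sB.
Qed.

Lemma Kconn_sym k (A B : {set T}) : Kconn e k A B = Kconn e k B A.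
Proof. exact: (sym_connect_sym (@Kstep_sym k)). Qed.

Lemma Kstep_swap k (K A : {set T}) a b :
  is_clique e K -> A \subset K -> #|A| = k -> a \in A -> b \in K :\: A ->
  Kstep e k A (b |: (A :\ a)).
Proof.
move=> cK sAK cardA aA /setDP[bK bA].
have sbAK : b |: A \subset K by rewrite subUset sub1set bK sAK.
have sAa : b |: (A :\ a) \subset b |: A by apply/setUS/subD1set.
apply/and3P; split.
- by rewrite /Kcopy (subset_clique sAK cK) cardA eqxx.
- by rewrite /Kcopy (subset_clique (subset_trans sAa sbAK) cK) cards_swap // cardA eqxx.
- apply/existsP; exists (b |: A); rewrite sAa subsetUr /Kcopy.
  by rewrite (subset_clique sbAK cK) cardsU1 bA cardA add1n eqxx.
Qed.

Lemma Kconn_in_clique k (K A B : {set T}) :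
  is_clique e K -> A \subset K -> B \subset K -> #|A| = k -> #|B| = k ->
  Kconn e k A B.
Proof.
move=> cK; move Em: #|A :\: B| => m; elim: m A Em => [|m IH] A Em sAK sBK cardA cardB.
  have sAB : A \subset B by rewrite -setD_eq0 -cards_eq0 Em.
  have -> : A = B by apply/eqP; rewrite eqEcard sAB cardA cardB leqnn.
  exact: connect0.
have [a aAB] : exists a, a \in A :\: B by apply/set0Pn; rewrite -cards_eq0 Em.
have [b bBA] : exists b, b \in B :\: A.
  apply/set0Pn; rewrite -cards_eq0 cardsD.
  by move: (cardsD A B); rewrite setIC Em; lia.
have bKA : b \in K :\: A by move: bBA; rewrite !inE => /andP[-> /(subsetP sBK)->].
have [aA aB] : a \in A /\ a \notin B by move: aAB; rewrite !inE => /andP[].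
have [bA bB] : b \notin A /\ b \in B by move: bBA; rewrite !inE => /andP[].
apply: connect_trans (connect1 (Kstep_swap cK sAK cardA aA bKA)) _.
apply: IH => //.
- have -> : (b |: (A :\ a)) :\: B = (A :\: B) :\ a.
    by apply/setP => x; rewrite !inE; case: eqP => [->|_]; rewrite ?bB ?andbF // andbCA.
  by move: (cardsD1 a (A :\: B)); rewrite Em aAB; lia.
- by rewrite subUset sub1set (subsetP (subsetDl K A)) // (subset_trans (subD1set A a)).
- by rewrite cards_swap.
Qed.

Lemma mem_comp_vertices k (A B : {set T}) x :
  Kcopy e k B -> Kconn e k A B -> x \in B -> x \in comp_vertices e k A.
Proof. by move=> hB hAB xB; rewrite inE; apply/existsP; exists B; rewrite hB hAB xB. Qed.

End Cliques.

Section Components.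
Variables (T : finType) (e : rel T) (k : nat).

Lemma exists_not_Kconn (A : {set T}) :
  many_components e k -> exists2 B, Kcopy e k B & ~~ Kconn e k A B.
Proof.
case=> [A1 [A2 [copyA1 copyA2 nconn12]]].
case: (boolP (Kconn e k A A1)) => [connA1 | ]; last by exists A1.
exists A2 => //; apply: contra nconn12; rewrite Kconn_sym in connA1.
exact: connect_trans connA1.
Qed.

Lemma ext_subset_compl_comp_vertices (A B : {set T}) :
  ~~ Kconn e k A B -> ext e k A \subset ~: comp_vertices e k B.
Proof.
move=> nconnAB; apply/subsetP => x; rewrite !inE => /andP[_ /forallP extx].
apply/existsP => -[D /and3P[copyD connBD xD]]; move/negP: nconnAB; apply.
rewrite Kconn_sym in connBD; apply: connect_trans connBD.
by apply: (implyP (extx D)); rewrite copyD xD.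
Qed.

Lemma Kconn_notin_int x (A B : {set T}) :
  x \notin int_k e k -> Kcopy e k A -> Kcopy e k B -> x \in A -> x \in B ->
  Kconn e k A B.
Proof.
move=> xint copyA copyB xA xB; apply: contraNT xint => nconnAB.
rewrite inE; apply/existsP; exists A; apply/existsP; exists B.
by rewrite copyA copyB nconnAB xA xB.
Qed.

Lemma mem_ext_notin_int x (A B : {set T}) :
  x \notin int_k e k -> Kcopy e k B -> Kconn e k A B -> x \in B -> x \in ext e k A.
Proof.
move=> xint copyB connAB xB; rewrite inE (mem_comp_vertices copyB connAB xB).
apply/forallP => D; apply/implyP => /andP[copyD xD].
exact: connect_trans connAB (Kconn_notin_int xint copyB copyD xB xD).
Qed.

End Components.

Definition non_nbhd (T : finType) (e : rel T) (v : T) : {set T} := [set w | ~~ e v w].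

Section LargeMinimumDegree.
Variables (T : finType) (e : rel T) (k delta : nat).
Hypotheses (esym : symmetric e) (eirr : irreflexive e).
Hypothesis deg_ge : forall v, delta <= deg e v.
Hypothesis few_non_nbrs : k * (#|T| - delta) < #|T|.
Hypotheses (k_ge2 : 2 <= k) (many : many_components e k).

Lemma card_non_nbhd v : #|non_nbhd e v| = #|T| - deg e v.
Proof.
rewrite /deg -(cardsC [set w | e v w]) addKn.
by apply: eq_card => w; rewrite !inE.
Qed.

Lemma mem_non_nbhd_self v : v \in non_nbhd e v.
Proof. by rewrite inE eirr. Qed.

Lemma deg_lt_card v : deg e v < #|T|.
Proof.
rewrite -subn_gt0 -card_non_nbhd card_gt0.
by apply/set0Pn; exists v; apply: mem_non_nbhd_self.
Qed.

Lemma sum_card_non_nbhd (Q : {set T}) :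
  \sum_(w in Q) #|non_nbhd e w| = \sum_v #|Q :&: non_nbhd e v|.
Proof.
have card_ind (A : {set T}) : #|A| = \sum_x (x \in A : nat).
  by rewrite -sum1_card big_mkcond /=; apply: eq_bigr => x _; case: (x \in A).
under eq_bigr => w _ do rewrite card_ind.
under [RHS]eq_bigr => v _ do rewrite card_ind.
rewrite exchange_big big_mkcond /=; apply: eq_bigr => v _; rewrite big_mkcond.
by apply: eq_bigr => w _; rewrite !inE (esym w); case: (w \in Q).
Qed.

Lemma sum_card_non_nbhd_le (Q : {set T}) :
  \sum_v #|Q :&: non_nbhd e v| <= #|Q| * (#|T| - delta).
Proof.
rewrite -sum_card_non_nbhd -sum_nat_const; apply: leq_sum => w _.
by rewrite card_non_nbhd leq_sub2l.
Qed.

Lemma exists_common_nbr (Q : {set T}) :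
  #|Q| <= k -> exists2 v, v \notin Q & {in Q, forall q, e q v}.
Proof.
move=> cardQ; case: (pickP [pred v | [forall q in Q, e q v]]) => [v /forall_inP Qv|noQ].
  by exists v => //; apply/negP => /Qv; rewrite eirr.
suff : #|T| < #|T| by rewrite ltnn.
(* Otherwise each vertex has a non-neighbour in Q, and n <= |Q| c <= k c < n. *)
apply: leq_trans few_non_nbrs.
apply: leq_trans (leq_mul cardQ (leqnn _)); apply: leq_trans (sum_card_non_nbhd_le Q).
rewrite -sum1_card; apply: leq_sum => v _; rewrite card_gt0; apply/set0Pn.
have /forall_inPn[q qQ nqv] := negbT (noQ v).
by exists q; rewrite !inE qQ esym.
Qed.

Lemma clique_extend (Q : {set T}) j :
  is_clique e Q -> #|Q| <= j <= k.+1 -> exists2 K, Kcopy e j K & Q \subset K.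
Proof.
move=> cQ; elim: j => [|j IH] /andP[leQj lejk].
  by exists Q; rewrite ?subxx // /Kcopy cQ -leqn0.
move: leQj; rewrite leq_eqVlt => /orP[/eqP cardQ | ltQj].
  by exists Q; rewrite ?subxx // /Kcopy cQ cardQ eqxx.
have [K /andP[cK /eqP cardK] sQK] : exists2 K, Kcopy e j K & Q \subset K.
  by apply: IH; rewrite -ltnS ltQj ltnW.
have [v vK Kv] : exists2 v, v \notin K & {in K, forall w, e w v}.
  by apply: exists_common_nbr; rewrite cardK -ltnS.
exists (v |: K); last exact: subset_trans sQK (subsetUr _ _).
by rewrite /Kcopy clique_setU1 // cardsU1 vK cardK add1n eqxx.
Qed.

Lemma Kcopy_superset (Q : {set T}) :
  is_clique e Q -> #|Q| <= k -> exists2 A, Kcopy e k A & Q \subset A.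
Proof. by move=> cQ cardQ; apply: clique_extend cQ _; rewrite cardQ leqnSn. Qed.

Lemma mem_comp_vertices_of_clique (K B : {set T}) v :
  0 < k -> is_clique e K -> Kcopy e k B -> B \subset K ->
  #|K :&: non_nbhd e v| + k <= #|K| -> v \in comp_vertices e k B.
Proof.
move=> k_gt0 cK /andP[_ /eqP cardB] sBK many_nbrs.
have /exists_subset_card[A sAN cardA] : k <= #|K :\: non_nbhd e v|.
  by rewrite cardsD; lia.
have sAK : A \subset K := subset_trans sAN (subsetDl _ _).
have Av : {in A, forall a, e a v}.
  by move=> a /(subsetP sAN); rewrite !inE negbK esym => /andP[].
have vA : v \notin A by apply/negP => /Av; rewrite eirr.
have [a aA] : exists a, a \in A by apply/card_gt0P; rewrite cardA.
have cvA := clique_setU1 esym (subset_clique sAK cK) Av.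
have vvA : v \in (v |: A) :\: A by rewrite !inE eqxx vA.
have step := Kstep_swap cvA (subsetUr _ _) cardA aA vvA.
have /and3P[_ copy_vA _] := step.
have conn_vA := connect_trans (Kconn_in_clique cK sBK sAK cardB cardA) (connect1 step).
exact: mem_comp_vertices copy_vA conn_vA (setU11 _ _).
Qed.

Lemma maxset_clique_non_nbhd (K : {set T}) v :
  maxset (is_clique e) K -> 0 < #|K :&: non_nbhd e v|.
Proof.
move=> /maxsetP[cK maxK]; rewrite card_gt0; apply/negP => /eqP noK.
have Kv : {in K, forall w, e w v}.
  move=> w wK; apply/negPn/negP => nwv.
  by have := in_set0 w; rewrite -noK !inE wK esym nwv.
have vK : v \notin K by apply/negP => /Kv; rewrite eirr.
have /setP/(_ v) := maxK _ (clique_setU1 esym cK Kv) (subsetUr _ _).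
by rewrite setU11 (negbTE vK).
Qed.

Lemma card_compl_comp_vertices (B : {set T}) :
  0 < k -> Kcopy e k B -> #|~: comp_vertices e k B| < #|T| - delta.
Proof.
move=> k_gt0 copyB; have /andP[cB /eqP cardB] := copyB.
have [K0 /andP[cK0 /eqP cardK0] sBK0] : exists2 K0, Kcopy e k.+1 K0 & B \subset K0.
  by apply: clique_extend cB _; rewrite cardB leqnSn leqnn.
have [K maxK sK0K] := maxset_exists cK0.
have cK := maxsetp maxK; have sBK := subset_trans sBK0 sK0K.
have ltkK : k < #|K| by rewrite -cardK0 subset_leq_card.
set M := comp_vertices e k B; set s := #|K|.
have nbhd_bound v : 1 + (v \notin M) * (s - k) <= #|K :&: non_nbhd e v|.
  case: (boolP (v \in M)) => vM; first by rewrite addn0 maxset_clique_non_nbhd.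
  rewrite leqNgt; apply/negP => few; move/negP: vM; apply.
  by apply: mem_comp_vertices_of_clique copyB sBK _; rewrite -/s; lia.
have lower : #|T| + #|~: M| * (s - k) <= \sum_v #|K :&: non_nbhd e v|.
  apply: (@leq_trans (\sum_v (1 + (v \notin M) * (s - k)))); last exact: leq_sum.
  rewrite big_split /= sum1_card -sum_nat_const big_mkcond /=.
  apply/eq_leq; congr (_ + _); apply: eq_bigr => v _.
  by rewrite inE; case: (v \in M); rewrite /= ?mul1n.
have := leq_trans lower (sum_card_non_nbhd_le K); rewrite -/s.
move: few_non_nbrs ltkK; nia.
Qed.


Lemma card_ext_lt (A : {set T}) : Kcopy e k A -> #|ext e k A| < #|T| - delta.
Proof.
move=> copyA; have [B copyB nconnAB] := exists_not_Kconn A many.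
apply: leq_ltn_trans (subset_leq_card (ext_subset_compl_comp_vertices nconnAB)) _.
exact: card_compl_comp_vertices (ltnW k_ge2) copyB.
Qed.

Lemma compl_int_subset x1 (A : {set T}) :
  x1 \notin int_k e k -> Kcopy e k A -> x1 \in A ->
  ~: int_k e k \subset ext e k A :|: non_nbhd e x1.
Proof.
move=> x1int copyA x1A; apply/subsetP => x; rewrite inE => xint.
rewrite in_setU [x \in non_nbhd e x1]inE.
case: (boolP (e x1 x)) => [adj|]; last by rewrite orbT.
have cQ : is_clique e (x1 |: [set x]).
  by apply: clique_setU1 (clique_set1 e x) _ => // a /set1P->; rewrite esym.
have cardQ : #|x1 |: [set x]| <= k.
  rewrite cardsU1 cards1 in_set1; case: eqP => [x1x|_]; last by rewrite add1n.
  by move: adj; rewrite x1x eirr.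
have [B copyB sQB] := Kcopy_superset cQ cardQ.
have x1B : x1 \in B by rewrite (subsetP sQB) ?setU11.
have xB : x \in B by rewrite (subsetP sQB) // !inE eqxx orbT.
have connAB := Kconn_notin_int x1int copyA copyB x1A x1B.
by rewrite (mem_ext_notin_int xint copyB connAB xB).
Qed.

Lemma card_int_ge : 2 * delta + 2 <= #|int_k e k| + #|T|.
Proof.
have [A1 [_ [copyA1 _ _]]] := many.
have := card_ext_lt copyA1; have := cardsC (int_k e k).
case: (set_0Vmem (~: int_k e k)) => [-> | [x1]]; first by rewrite cards0; lia.
rewrite inE => x1int.
have cardx1 : #|[set x1]| <= k by rewrite cards1 ltnW.
have [A copyA sx1A] := Kcopy_superset (clique_set1 e x1) cardx1.
have x1A : x1 \in A by rewrite (subsetP sx1A) ?set11.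
have x1ext := mem_ext_notin_int x1int copyA (connect0 _ A) x1A.
have : 0 < #|ext e k A :&: non_nbhd e x1|.
  by rewrite card_gt0; apply/set0Pn; exists x1; rewrite inE x1ext mem_non_nbhd_self.
have := subset_leq_card (compl_int_subset x1int copyA x1A); rewrite cardsU.
have := card_ext_lt copyA; have := card_non_nbhd x1; have := deg_ge x1.
lia.
Qed.

End LargeMinimumDegree.

Theorem lemma6p2 (T : finType) (e : rel T) (k delta : nat) :
  symmetric e -> irreflexive e -> 2 <= k ->
  (forall v : T, delta <= deg e v) -> (exists v : T, deg e v = delta) ->
  (k - 1) * #|T| < k * delta ->
  many_components e k ->
  ((#|T| < 2 * delta + 2) /\ (2 * delta + 2 <= #|int_k e k| + #|T|)) /\
  (forall A : {set T}, Kcopy e k A -> #|ext e k A| + delta + 1 <= #|T|).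
Proof.
move=> esym eirr k_ge2 deg_ge [v0 deg_v0] delta_gt many.
have delta_lt : delta < #|T| by rewrite -deg_v0 deg_lt_card.
have few_non_nbrs : k * (#|T| - delta) < #|T| by nia.
split; first split.
- by move: few_non_nbrs; nia.
- exact: card_int_ge.
- by move=> A /(card_ext_lt esym eirr deg_ge few_non_nbrs k_ge2 many); lia.
Qed.
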